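(* Let $S$ be a semigroup, $T$ an ideal of $S$ and $U=S/T$ the Rees quotient. Let $\langle A\mid R\rangle$ be a finite complete semigroup presentation of $T$ and $\langle B\mid Q\rangle$ a finite complete semigroup presentation of $U$, where $A\cap B=\emptyset$. Let $B_0\subseteq B$ be the set of letters representing the zero of $U$, and $Q_0\subseteq Q$ the set of rules $(u,v)$ for which $u$ (equivalently $v$) represents the zero of $U$; assume $B_0$ contains a letter $0$ which is the unique $Q$-irreducible word representing the zero of $U$. Words over $A\cup (B\setminus B_0)$ represent elements of $S$ in the natural way (letters of $A$ represent elements of $T$ via the given presentation; letters of $B\setminus B_0$ represent the corresponding nonzero elements of $U$, identified with elements of $S\setminus T$). For each $u\in(B\setminus B_0)^+$ representing the zero of $U$ fix $\rho(u)\in A^+$ with $u=\rho(u)$ in $S$, and for $a\in A$, $b\in B\setminus B_0$ fix $\sigma(a,b),\pi(b,a)\in A^+$ with $ab=\sigma(a,b)$ and $ba=\pi(b,a)$ in $S$. Let $V$ be the rewriting system on $A\cup(B\setminus B_0)$ consisting of $R$, $Q\setminus Q_0$, and the rules $u\to\rho(u)$ (for $u\in(B\setminus B_0)^+$ such that $(u,v)\in Q_0$ or $(v,u)\in Q_0$ for some $v$), $ab\to\sigma(a,b)$ and $ba\to\pi(b,a)$ ($a\in A$, $b\in B\setminus B_0$). Then for every word $w\in(A\cup B\setminus B_0)^+$: (i) if $w$ represents an element of $T$, then there is $w'\in A^+$ with $w\to_V^* w'$; (ii) otherwise $w\in(B\setminus B_0)^+$.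
   Context: For a rewriting system $V$, $\to_V$ denotes one-step reduction ($w_1uw_2\to_V w_1vw_2$ for a rule $u\to v$ in $V$) and $\to_V^*$ its reflexive transitive closure. A rewriting system is complete if it is noetherian (no infinite reduction chains) and confluent. The Rees quotient $S/T$ identifies all elements of $T$ to a single zero. *)

From mathcomp Require Import all_boot.
From Stdlib Require Export Relations.Relation_Operators.

Set Implicit Arguments.
Unset Strict Implicit.
Unset Printing Implicit Defensive.

Definition rw_step (X : Type) (rules : seq X * seq X -> Prop) (u v : seq X) : Prop :=
  exists w1 w2 l r, rules (l, r) /\ u = w1 ++ l ++ w2 /\ v = w1 ++ r ++ w2.

Definition rw_star (X : Type) (rules : seq X * seq X -> Prop) : seq X -> seq X -> Prop :=
  clos_refl_trans (seq X) (rw_step rules).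

Definition noetherian (X : Type) (rules : seq X * seq X -> Prop) : Prop :=
  well_founded (fun v u => rw_step rules u v).

Definition confluent (X : Type) (rules : seq X * seq X -> Prop) : Prop :=
  forall w u v, rw_star rules w u -> rw_star rules w v ->
    exists z, rw_star rules u z /\ rw_star rules v z.

Definition complete (X : Type) (rules : seq X * seq X -> Prop) : Prop :=
  noetherian rules /\ confluent rules.

Definition irreducible (X : Type) (rules : seq X * seq X -> Prop) (w : seq X) : Prop :=
  ~ exists v, rw_step rules w v.

Definition of_seq (X : eqType) (R : seq (seq X * seq X)) : seq X * seq X -> Prop :=
  fun r => r \in R.

Definition evalw (X Y : Type) (mulY : Y -> Y -> Y) (f : X -> Y) (w : seq X) : option Y :=
  match w with
  | [::] => None
  | x :: w' => Some (foldl (fun acc y => mulY acc (f y)) (f x) w')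
  end.

(* <X | rules> is a (semigroup) presentation of the subsemigroup P of (Y, mulY)
   via the generator map f : X -> Y: rules are pairs of nonempty words,
   the generators land in P, every element of P is the value of a (nonempty) word,
   and two nonempty words have the same value iff they are equivalent under the
   congruence generated by the rules. *)
Definition is_presentation (X : eqType) (Y : Type) (mulY : Y -> Y -> Y)
    (P : Y -> Prop) (f : X -> Y) (rules : seq (seq X * seq X)) : Prop :=
  [/\ forall r, r \in rules -> r.1 != [::] /\ r.2 != [::],
      forall x, P (f x),
      forall y, P y -> exists w, evalw mulY f w = Some y &
      forall u v, u != [::] -> v != [::] ->
        (evalw mulY f u = evalw mulY f v <->
         clos_refl_sym_trans (seq X) (rw_step (of_seq rules)) u v)].

Definition is_ideal (S : Type) (mul : S -> S -> S) (T : pred S) : Prop :=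
  forall x y, T y -> T (mul x y) /\ T (mul y x).

(* Rees quotient S/T modelled on option S: [Some s] (s not in T) is the class
   of s, and [None] is the zero. *)
Definition reesmul (S : Type) (mul : S -> S -> S) (T : pred S) (x y : option S)
  : option S :=
  match x, y with
  | Some a, Some b => if T (mul a b) then None else Some (mul a b)
  | _, _ => None
  end.

Definition rees_elt (S : Type) (T : pred S) (x : option S) : Prop :=
  match x with None => True | Some s => ~~ T s end.

(* value in S of a letter of A + B (None for letters of B0) *)
Definition valS (S : Type) (A B : Type) (psi : A -> S) (phi : B -> option S)
    (x : A + B) : option S :=
  match x with inl a => Some (psi a) | inr b => phi b end.

(* value in S of a word over A + B; None if empty or if it contains a letter of B0 *)
Definition evalS (S : Type) (mul : S -> S -> S) (A B : Type) (psi : A -> S)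
    (phi : B -> option S) (w : seq (A + B)) : option S :=
  match w with
  | [::] => None
  | x :: w' => foldl (fun acc y => obind (fun a => omap (mul a) (valS psi phi y)) acc)
                     (valS psi phi x) w'
  end.

Definition nzB (S B : Type) (phi : B -> option S) (b : B) : bool := isSome (phi b).

Definition Vrules (S : Type) (mul : S -> S -> S) (T : pred S) (A B : finType)
    (phi : B -> option S) (R : seq (seq A * seq A)) (Q : seq (seq B * seq B))
    (rho : seq B -> seq A) (sigma : A -> B -> seq A) (pi : B -> A -> seq A)
    (r : seq (A + B) * seq (A + B)) : Prop :=
  let evalU := evalw (reesmul mul T) phi in
  (exists l r', (l, r') \in R /\ r = (map inl l, map inl r'))
  \/ (exists q, q \in Q /\ evalU q.1 <> Some None /\ r = (map inr q.1, map inr q.2))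
  \/ (exists u, u != [::] /\ all (nzB phi) u /\
        (exists q, q \in Q /\ evalU q.1 = Some None /\ (u = q.1 \/ u = q.2)) /\
        r = (map inr u, map inl (rho u)))
  \/ (exists a b, nzB phi b /\ r = ([:: inl a; inr b], map inl (sigma a b)))
  \/ (exists a b, nzB phi b /\ r = ([:: inr b; inl a], map inl (pi b a))).

From mathcomp Require Import all_boot zify.
From Stdlib Require Import Classical.

(* If w contains a letter of A, the rules ab -> sigma(a,b) and ba -> pi(b,a)
   absorb the letters of B \ B0 one at a time, since letters of A represent
   elements of the ideal T.  Otherwise w is a word over B \ B0, and it lies in T
   only if it represents the zero of U.  By noetherian induction along a
   Q-reduction of w: a rule of Q \ Q0 is also a rule of V and keeps the word
   over B \ B0, while a rule of Q0 is simulated by u -> rho(u), which creates a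
   letter of A, so that the first case applies.  The reduction cannot end in a
   Q-irreducible word over B \ B0, because the only irreducible word for zero
   is the letter 0 of B0. *)

Set Implicit Arguments.
Unset Strict Implicit.
Unset Printing Implicit Defensive.

Definition is_inl (A B : Type) (x : A + B) : bool := if x is inl _ then true else false.
Arguments is_inl {A B}.

Definition valid_letter (A B : Type) (ok : pred B) (x : A + B) : bool :=
  if x is inr b then ok b else true.

Section SumWords.

Variables A B : Type.
Implicit Types w : seq (A + B).

Lemma all_is_inlP w : all is_inl w -> {w' : seq A | w = map inl w'}.
Proof.
elim: w => [|[a|//] w IH] /=; first by exists [::].
by move=> /IH [w' ->]; exists (a :: w').
Qed.

Lemma hasNis_inlP w : ~~ has is_inl w -> {u : seq B | w = map inr u}.
Proof.
elim: w => [|[//|b] w IH] /=; first by exists [::].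
by move=> /IH [u ->]; exists (b :: u).
Qed.

Lemma all_valid_inl (ok : pred B) (s : seq A) : all (valid_letter ok) (map inl s).
Proof. by elim: s. Qed.

Lemma all_valid_inr (ok : pred B) (u : seq B) :
  all (valid_letter ok) (map (@inr A B) u) = all ok u.
Proof. by elim: u => //= b u ->. Qed.

Lemma mixed_word_adjacent w :
  has is_inl w -> ~~ all is_inl w ->
  exists w1 x y w2, w = w1 ++ [:: x; y] ++ w2 /\ is_inl x != is_inl y.
Proof.
elim: w => [//|x [|y w] IH]; first by case: x.
case: (boolP (is_inl x == is_inl y)) => [/eqP xy|xy] hasl allNl; last first.
  by exists [::], x, y, w.
have [] : has is_inl (y :: w) /\ ~~ all is_inl (y :: w).
  by move: hasl allNl => /=; rewrite xy; case: (is_inl y) => //= ->.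
move=> /IH /[apply] [[w1 [x' [y' [w2 [-> x'y']]]]]].
by exists (x :: w1), x', y', w2.
Qed.

End SumWords.

Lemma rw_step_ctx (X : Type) (rules : seq X * seq X -> Prop) w1 w2 l r :
  rules (l, r) -> rw_step rules (w1 ++ l ++ w2) (w1 ++ r ++ w2).
Proof. by move=> lr; exists w1, w2, l, r. Qed.

Section Absorption.

Variables (A : eqType) (B : Type) (ok : pred B) (rules : seq (A + B) * seq (A + B) -> Prop).
Variables (sigma : A -> B -> seq A) (pi : B -> A -> seq A).
Hypothesis sigma_rule : forall a b, ok b -> rules ([:: inl a; inr b], map inl (sigma a b)).
Hypothesis pi_rule : forall a b, ok b -> rules ([:: inr b; inl a], map inl (pi b a)).
Hypothesis sigma_neq0 : forall a b, ok b -> sigma a b != [::].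
Hypothesis pi_neq0 : forall a b, ok b -> pi b a != [::].

Lemma mixed_word_redex (w : seq (A + B)) :
  all (valid_letter ok) w -> has is_inl w -> ~~ all is_inl w ->
  exists w1 p s w2, [/\ w = w1 ++ p ++ w2, rules (p, map inl s), s != [::]
                       & count (predC is_inl) p = 1].
Proof.
move=> valid_w hasl allNl.
have [w1 [[a|b] [[a'|b'] [w2 [Ew //= _]]]]] := mixed_word_adjacent hasl allNl.
- have ok_b' : ok b' by move: valid_w; rewrite Ew !all_cat /= andbT => /and3P [].
  by exists w1, [:: inl a; inr b'], (sigma a b'), w2; split; auto.
- have ok_b : ok b by move: valid_w; rewrite Ew !all_cat /= andbT => /and3P [].
  by exists w1, [:: inr b; inl a'], (pi b a'), w2; split; auto.
Qed.

Lemma absorb_B_letters (w : seq (A + B)) :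
  all (valid_letter ok) w -> has is_inl w ->
  exists w' : seq A, w' != [::] /\ rw_star rules w (map inl w').
Proof.
have [n] := ubnP (count (predC is_inl) w); elim: n w => // n IH w count_w valid_w hasl.
case: (boolP (all is_inl w)) => [/all_is_inlP [w' Ew]|allNl].
  exists w'; split; last by rewrite Ew; apply: rt_refl.
  by move: hasl; rewrite Ew; case: (w').
have [w1 [p [s [w2 [Ew ps s_neq0 count_p]]]]] := mixed_word_redex valid_w hasl allNl.
have inl_s : has is_inl (map (@inl A B) s) by case: (s) s_neq0.
have [|||w' [w'_neq0 reach]] := IH (w1 ++ map inl s ++ w2).
- have inl_count : count (predC is_inl) (map (@inl A B) s) = 0 by elim: (s).
  by move: count_w; rewrite Ew !count_cat count_p inl_count; lia.
- by move: valid_w; rewrite Ew !all_cat all_valid_inl => /and3P [-> _ ->].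
- by rewrite !has_cat inl_s orbT.
exists w'; split => //; apply: rt_trans reach; apply: rt_step.
by rewrite Ew; apply: rw_step_ctx.
Qed.

End Absorption.

Section Evaluation.

Variables (S : Type) (mul : S -> S -> S) (T : pred S).
Hypothesis T_ideal : is_ideal mul T.
Variables (A : Type) (B : eqType) (psi : A -> S) (phi : B -> option S).
Hypothesis psi_in_T : forall a, T (psi a).

Let stepS (acc : option S) (x : A + B) := obind (fun s => omap (mul s) (valS psi phi x)) acc.
Let stepU (acc : option S) (b : B) := reesmul mul T acc (phi b).

Lemma foldl_stepS_valid (w : seq (A + B)) s :
  all (valid_letter (nzB phi)) w ->
  exists2 s', foldl stepS (Some s) w = Some s' & T s || has is_inl w -> T s'.
Proof.
elim: w s => [|[a|b] w IH] s /=; first by exists s => // /orP [].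
  case/(IH (mul s (psi a))) => s' -> Ts'; exists s' => // _.
  by apply: Ts'; rewrite (T_ideal s (psi_in_T a)).1.
rewrite /nzB; case: (phi b) => [t|//] /= /(IH (mul s t)) [s' -> Ts'].
by exists s' => // /orP [Ts|hasl]; apply: Ts'; rewrite ?(T_ideal t Ts).2 ?hasl ?orbT.
Qed.

Lemma evalS_has_inl (w : seq (A + B)) :
  all (valid_letter (nzB phi)) w -> has is_inl w ->
  exists s, evalS mul psi phi w = Some s /\ T s.
Proof.
case: w => [//|[a|b] w] /=.
  by case/(foldl_stepS_valid (psi a)) => s' -> Ts' _; exists s'; rewrite Ts' ?psi_in_T.
rewrite /nzB; case: (phi b) => [t|//] /= /(foldl_stepS_valid t) [s' -> Ts'] hasl.
by exists s'; rewrite Ts' ?hasl ?orbT.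
Qed.

Definition rees_class (s : S) : option S := if T s then None else Some s.

Lemma reesmul_class s t : reesmul mul T (rees_class s) (Some t) = rees_class (mul s t).
Proof.
rewrite /rees_class; case: (boolP (T s)) => [Ts|] //=.
by rewrite (T_ideal t Ts).2.
Qed.

Lemma foldl_stepU_class (u : seq B) s :
  all (nzB phi) u ->
  exists2 s', foldl stepS (Some s) (map inr u) = Some s'
            & foldl stepU (rees_class s) u = rees_class s'.
Proof.
elim: u s => [|b u IH] s /=; first by exists s.
by rewrite /stepU /nzB; case: (phi b) => [t|//] /= /(IH (mul s t)); rewrite reesmul_class.
Qed.

Lemma evalw_rees_evalS (u : seq B) :
  (forall b, rees_elt T (phi b)) -> u != [::] -> all (nzB phi) u ->
  exists2 s, evalS mul psi phi (map inr u) = Some s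
           & evalw (reesmul mul T) phi u = Some (rees_class s).
Proof.
case: u => [//|b u] phi_rees _ /=; have := phi_rees b.
rewrite /nzB; case: (phi b) => [t|//] /= NTt /(foldl_stepU_class t) [s' -> Es'].
by exists s'; rewrite // -Es' /rees_class (negbTE NTt).
Qed.

Lemma foldl_stepU_None (u : seq B) : foldl stepU None u = None.
Proof. by elim: u. Qed.

Lemma foldl_stepU_B0 (u : seq B) acc :
  ~~ all (nzB phi) u -> foldl stepU acc u = None.
Proof.
elim: u acc => [//|b u IH] acc /=; rewrite negb_and /nzB => /orP [|/IH //].
by rewrite /stepU; case: (phi b) => //= _; case: acc => *; apply: foldl_stepU_None.
Qed.

Lemma evalw_rees_B0 (u : seq B) :
  u != [::] -> ~~ all (nzB phi) u -> evalw (reesmul mul T) phi u = Some None.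
Proof.
case: u => [//|b u] _ /=; rewrite negb_and /nzB => /orP [|/foldl_stepU_B0 -> //].
by case: (phi b) => //= _; rewrite foldl_stepU_None.
Qed.

Lemma evalw_rees_inT (u : seq B) s :
  (forall b, rees_elt T (phi b)) -> u != [::] -> all (nzB phi) u ->
  evalS mul psi phi (map inr u) = Some s -> T s ->
  evalw (reesmul mul T) phi u = Some None.
Proof.
move=> phi_rees u_neq0 nz_u eval_s Ts.
have [s'] := evalw_rees_evalS phi_rees u_neq0 nz_u.
by rewrite eval_s => -[<-] ->; rewrite /rees_class Ts.
Qed.

End Evaluation.

Lemma presentation_step_eval (X : eqType) (Y : Type) (mulY : Y -> Y -> Y)
    (P : Y -> Prop) (f : X -> Y) (rules : seq (seq X * seq X)) (u v : seq X) :
  is_presentation mulY P f rules -> rw_step (of_seq rules) u v ->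
  evalw mulY f u = evalw mulY f v.
Proof.
case=> rules_neq0 _ _ eval_congr uv; have [w1 [w2 [l [r [lr [-> ->]]]]]] := uv.
have [/= l_neq0 r_neq0] := rules_neq0 _ lr.
apply/eval_congr; last by apply: rst_step; apply: rw_step_ctx.
all: by move: l_neq0 r_neq0; rewrite -!size_eq0 !size_cat; lia.
Qed.

Section SystemV.

Variables (S : Type) (mul : S -> S -> S) (T : pred S) (A B : finType) (phi : B -> option S).
Variables (R : seq (seq A * seq A)) (Q : seq (seq B * seq B)).
Variables (rho : seq B -> seq A) (sigma : A -> B -> seq A) (pi : B -> A -> seq A).

Local Notation evalU := (evalw (reesmul mul T) phi).
Local Notation V := (Vrules mul T phi R Q rho sigma pi).

Hypothesis sigma_neq0 : forall a b, nzB phi b -> sigma a b != [::].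
Hypothesis pi_neq0 : forall a b, nzB phi b -> pi b a != [::].

Lemma V_absorb_B_letters (w : seq (A + B)) :
  all (valid_letter (nzB phi)) w -> has is_inl w ->
  exists w' : seq A, w' != [::] /\ rw_star V w (map inl w').
Proof.
apply: (absorb_B_letters _ _ sigma_neq0 pi_neq0) => a b nz_b.
  by do 3 right; left; exists a, b.
by do 4 right; exists a, b.
Qed.

Hypothesis Q_neq0 : forall r, r \in Q -> r.1 != [::] /\ r.2 != [::].
Hypothesis Q_step_eval : forall u v, rw_step (of_seq Q) u v -> evalU u = evalU v.
Hypothesis Q_noetherian : noetherian (of_seq Q).
Hypothesis irreducible_zero_B0 :
  forall u, irreducible (of_seq Q) u -> evalU u = Some None -> ~~ all (nzB phi) u.
Hypothesis rho_neq0 :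
  forall u, u != [::] -> all (nzB phi) u -> evalU u = Some None -> rho u != [::].

Lemma zero_word_reduces_to_A (u : seq B) :
  u != [::] -> all (nzB phi) u -> evalU u = Some None ->
  exists w' : seq A, w' != [::] /\ rw_star V (map inr u) (map inl w').
Proof.
elim/(well_founded_ind Q_noetherian): u => u IH u_neq0 nz_u zero_u.
have [v uv] : exists v, rw_step (of_seq Q) u v.
  apply: NNPP => irr_u.
  by have := irreducible_zero_B0 irr_u zero_u; rewrite nz_u.
have [w1 [w2 [l [r [lr [Eu Ev]]]]]] := uv.
have [/= l_neq0 r_neq0] := Q_neq0 lr.
have /and3P [nz_w1 nz_l nz_w2] : [&& all (nzB phi) w1, all (nzB phi) l & all (nzB phi) w2].
  by rewrite -!all_cat -Eu.
have [zero_l|nzero_l] : evalU l = Some None \/ evalU l <> Some None.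
  by case: (evalU l) => [[?|]|]; [right|left|right].
- (* l represents zero: replace it by rho(l) and absorb the surrounding B-letters. *)
  set w0 := map inr w1 ++ map inl (rho l) ++ map inr w2.
  have rho_l_neq0 := rho_neq0 l_neq0 nz_l zero_l.
  have [||w' [w'_neq0 reach]] := V_absorb_B_letters (w := w0).
  + by rewrite !all_cat !all_valid_inr all_valid_inl nz_w1 nz_w2.
  + by rewrite !has_cat; case: (rho l) rho_l_neq0 => //= *; rewrite orbT.
  exists w'; split => //; apply: rt_trans reach; apply: rt_step.
  rewrite Eu !map_cat; apply: rw_step_ctx.
  by do 2 right; left; exists l; repeat split => //; exists (l, r); auto.
- (* (l, r) lies in Q \ Q0, and r has the nonzero value of l, so it avoids B0. *)
  have lr_eval : evalU l = evalU r.
    by apply: Q_step_eval; exists [::], [::], l, r; rewrite !cats0.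
  have nz_r : all (nzB phi) r.
    by apply: contraT => /(evalw_rees_B0 mul T r_neq0) zero_r; case: nzero_l; rewrite lr_eval.
  have [|||w' [w'_neq0 reach]] := IH v uv.
  + by move: r_neq0; rewrite Ev -!size_eq0 !size_cat; lia.
  + by rewrite Ev !all_cat nz_w1 nz_r nz_w2.
  + by rewrite -(Q_step_eval uv).
  exists w'; split => //; apply: rt_trans reach; apply: rt_step.
  rewrite Eu Ev !map_cat; apply: rw_step_ctx.
  by right; left; exists (l, r).
Qed.

End SystemV.

Theorem lemma3p1
  (S : Type) (mul : S -> S -> S) (mulA : associative mul)
  (T : pred S) (T_ideal : is_ideal mul T)
  (A B : finType)
  (psi : A -> S) (R : seq (seq A * seq A))
  (presT : is_presentation mul (fun s => T s) psi R)
  (complR : complete (of_seq R))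
  (phi : B -> option S) (Q : seq (seq B * seq B))
  (presU : is_presentation (reesmul mul T) (rees_elt T) phi Q)
  (complQ : complete (of_seq Q))
  (zero_unique : exists z : B, phi z = None /\ irreducible (of_seq Q) [:: z] /\
      forall w : seq B, irreducible (of_seq Q) w ->
        evalw (reesmul mul T) phi w = Some None -> w = [:: z])
  (rho : seq B -> seq A) (sigma : A -> B -> seq A) (pi : B -> A -> seq A)
  (rhoP : forall u : seq B, u != [::] -> all (nzB phi) u ->
      evalw (reesmul mul T) phi u = Some None ->
      rho u != [::] /\ evalS mul psi phi (map inl (rho u)) = evalS mul psi phi (map inr u))
  (sigmaP : forall (a : A) (b : B), nzB phi b ->
      sigma a b != [::] /\
      evalS mul psi phi (map inl (sigma a b)) = evalS mul psi phi [:: inl a; inr b])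
  (piP : forall (a : A) (b : B), nzB phi b ->
      pi b a != [::] /\
      evalS mul psi phi (map inl (pi b a)) = evalS mul psi phi [:: inr b; inl a]) :
  forall w : seq (A + B), w != [::] ->
    all (fun x => match x with inl _ => true | inr b => nzB phi b end) w ->
    ((exists s, evalS mul psi phi w = Some s /\ T s) ->
       exists w' : seq A, w' != [::] /\
         rw_star (Vrules mul T phi R Q rho sigma pi) w (map inl w'))
    /\
    (~ (exists s, evalS mul psi phi w = Some s /\ T s) ->
       exists u : seq B, w = map inr u).
Proof.
have [Q_neq0 phi_rees _ _] := presU.
have [_ psi_in_T _ _] := presT.
have sigma_neq0 a b (nz_b : nzB phi b) := (sigmaP a b nz_b).1.
have pi_neq0 a b (nz_b : nzB phi b) := (piP a b nz_b).1.
have rho_neq0 u u_neq0 nz_u zero_u := (rhoP u u_neq0 nz_u zero_u).1.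
have irreducible_zero_B0 u : irreducible (of_seq Q) u ->
    evalw (reesmul mul T) phi u = Some None -> ~~ all (nzB phi) u.
  have [z [z_B0 [_ zero_z]]] := zero_unique.
  by move=> irr_u /(zero_z u irr_u) ->; rewrite /= /nzB z_B0.
move=> w w_neq0 valid_w.
case: (boolP (has is_inl w)) => [hasl|/hasNis_inlP [u Ew]].
  split=> [_|[]]; last exact: evalS_has_inl.
  exact: V_absorb_B_letters sigma_neq0 pi_neq0 _ valid_w hasl.
split=> [[s [eval_s Ts]]|_]; last by exists u.
have u_neq0 : u != [::] by move: w_neq0; rewrite Ew; case: (u).
have nz_u : all (nzB phi) u by rewrite -(all_valid_inr A) -Ew.
rewrite Ew in eval_s *.
have zero_u := evalw_rees_inT T_ideal phi_rees u_neq0 nz_u eval_s Ts.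
have Q_step_eval u1 u2 := @presentation_step_eval _ _ _ _ _ _ u1 u2 presU.
exact: (zero_word_reduces_to_A R sigma_neq0 pi_neq0 Q_neq0 Q_step_eval complQ.1
          irreducible_zero_B0 rho_neq0 u_neq0 nz_u zero_u).
Qed.
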